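(* For every word $a_1\cdots a_n$ over a finite alphabet $A$, the following algorithm outputs, for each $i$, the value $x_i$ equal to the minimal length of an X-ranker $r$ with $r(a_1\cdots a_n)=i$: initialize $n_a\gets1$ for all $a\in A$; for $i=1,\dots,n$: let $c=a_i$, set $x_i\gets n_c$, then $n_c\gets n_c+1$, then for all $a\in A$ set $n_a\gets\min(n_a,n_c)$.
   Context: An X-ranker is a nonempty word over $\{\mathsf X_a : a\in A\}$; its length is its length as a word. For a word $w$, $\mathsf X_a(w)$ is the smallest $a$-position of $w$ and $r\mathsf X_a(w)$ is the smallest $a$-position greater than $r(w)$ (possibly undefined). *)

From mathcomp Require Import all_boot.
Set Implicit Arguments. Unset Strict Implicit. Unset Printing Implicit Defensive.

(* Words over a finite alphabet A are [seq A]; positions are 1-indexed.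
   An X-ranker X_{b1} ... X_{bk} is represented by the nonempty sequence
   [:: b1; ...; bk] of letters. *)

(* [next_pos w a p] = smallest a-position of w strictly greater than p
   (positions 1-indexed; p = 0 gives the smallest a-position). *)
Definition next_pos (A : eqType) (w : seq A) (a : A) (p : nat) : option nat :=
  let s := drop p w in
  let k := find (pred1 a) s in
  if k < size s then Some (p + k + 1) else None.

(* Evaluation of an X-ranker r on w: r(w), possibly undefined (None).
   X_a(w) = next_pos w a 0, and (r X_a)(w) = next_pos w a (r w). *)
Definition xeval (A : eqType) (w : seq A) (r : seq A) : option nat :=
  foldl (fun o a => obind (next_pos w a) o) (Some 0) r.

Fixpoint xalgo_aux (A : finType) (nv : A -> nat) (w : seq A) : seq nat :=
  match w with
  | [::] => [::]
  | c :: w' =>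
      let x := nv c in
      let nc := x.+1 in
      let nv' := fun a => minn (if a == c then nc else nv a) nc in
      x :: xalgo_aux nv' w'
  end.

Definition xalgo (A : finType) (w : seq A) : seq nat :=
  xalgo_aux (fun _ => 1) w.

From mathcomp Require Import all_boot.
Set Implicit Arguments. Unset Strict Implicit.

(* Write x_0 = 0 for the empty ranker, which sits at position 0. A ranker
   r X_c evaluates to i exactly when a_i = c and r evaluates to some q < i
   such that c does not occur in a_{q+1} ... a_{i-1}. Hence the least length
   of a ranker reaching i is 1 + min x_q over these q. After reading
   a_1 ... a_m the algorithm maintains
     n_a = 1 + min { x_q : q <= m, a does not occur in a_{q+1} ... a_m },
   so that x_{m+1} = n_{a_{m+1}} is exactly that minimum. *)

(* [drop q (take i.-1 w)] is the factor a_{q+1} ... a_{i-1}. *)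
Lemma next_posP (A : eqType) (w : seq A) a q i :
  next_pos w a q = Some i <->
  [/\ q < i <= size w, nth a w i.-1 = a & a \notin drop q (take i.-1 w)].
Proof.
rewrite /next_pos; split.
  case: ifP => // lt_find [<-].
  set s := drop q w in lt_find *; set k := find (pred1 a) s in lt_find *.
  have s_a : has (pred1 a) s by rewrite has_find.
  have /eqP nth_k := nth_find a s_a.
  have := has_take k s_a; rewrite ltnn has_pred1 take_drop => a_notin.
  rewrite size_drop in lt_find; rewrite nth_drop -/k addnC in nth_k.
  rewrite addn1 /= addnC a_notin; split => //.
  by rewrite ltnS leq_addl addnC -ltn_subRL.
case: i => [|j] [/andP[lt_qj lt_j] //= nth_j a_notin].
have split_w : drop q w = drop q (take j w) ++ a :: drop j.+1 w.
  rewrite -(cat_take_drop (j - q) (drop q w)) take_drop drop_drop subnK //.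
  by rewrite (drop_nth a lt_j) nth_j.
rewrite split_w find_cat has_pred1 (negPf a_notin) /= eqxx addn0.
rewrite size_cat /= size_drop size_takel ?(ltnW lt_j) //.
by rewrite addnS ltnS leq_addr addn1 subnKC.
Qed.

Lemma xeval_rcons (A : eqType) (w r : seq A) a :
  xeval w (rcons r a) = obind (next_pos w a) (xeval w r).
Proof. by rewrite /xeval foldl_rcons. Qed.

Section Algorithm.

Variable A : finType.
Implicit Types (s w r : seq A) (a c : A).

Definition xstep (n : A -> nat) c : A -> nat :=
  fun a => minn (if a == c then (n c).+1 else n a) (n c).+1.

Definition xstate s : A -> nat := foldl xstep (fun _ => 1) s.

(* x_i, extended by x_0 = 0 *)
Definition xval w i : nat := if i is j.+1 then nth 0 (xalgo w) j else 0.

Lemma xalgo_aux_cat n s t :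
  xalgo_aux n (s ++ t) = xalgo_aux n s ++ xalgo_aux (foldl xstep n s) t.
Proof. by elim: s n => [|c s IHs] n //=; rewrite IHs. Qed.

Lemma size_xalgo_aux n s : size (xalgo_aux n s) = size s.
Proof. by elim: s n => [|c s IHs] n //=; rewrite IHs. Qed.

Lemma xalgo_rcons s c : xalgo (rcons s c) = rcons (xalgo s) (xstate s c).
Proof. by rewrite /xalgo -cats1 xalgo_aux_cat cats1. Qed.

Lemma xval_rcons s c q :
  xval (rcons s c) q = if q == (size s).+1 then xstate s c else xval s q.
Proof.
case: q => [|j] //=; rewrite xalgo_rcons nth_rcons /xalgo size_xalgo_aux eqSS.
by case: ltngtP => // gt_j; rewrite nth_default // size_xalgo_aux; exact: ltnW.
Qed.

Lemma xval_take m w q : q <= m -> xval (take m w) q = xval w q.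
Proof.
case: q => [|j] //= lt_jm.
rewrite -{2}(cat_take_drop m w) /xalgo xalgo_aux_cat nth_cat size_xalgo_aux.
case: ltnP => // le_sz.
rewrite nth_default ?size_xalgo_aux // drop_oversize ?nth_nil //.
move: le_sz; rewrite size_take.
by case: ltnP => // _ /(leq_trans lt_jm); rewrite ltnn.
Qed.

Lemma xstate_rcons s c a :
  xstate (rcons s c) a =
  minn (if a == c then (xstate s c).+1 else xstate s a) (xstate s c).+1.
Proof. by rewrite /xstate foldl_rcons. Qed.

Lemma xstate_le s a q :
  q <= size s -> a \notin drop q s -> xstate s a <= (xval s q).+1.
Proof.
elim/last_ind: s q => [|s c IHs] q; first by rewrite leqn0 => /eqP ->.
rewrite size_rcons xstate_rcons xval_rcons.
case: ltngtP => [lt_q _|//|-> _ _]; last exact: geq_minr.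
rewrite drop_rcons // mem_rcons in_cons negb_or => /andP[/negbTE-> a_notin].
exact: leq_trans (geq_minl _ _) (IHs q lt_q a_notin).
Qed.

Lemma xstate_witness s a :
  exists q, [/\ q <= size s, a \notin drop q s & xstate s a = (xval s q).+1].
Proof.
elim/last_ind: s => [|s c [q [le_q a_notin eq_q]]]; first by exists 0.
have witness_last : xstate (rcons s c) a = (xstate s c).+1 ->
    exists q, [/\ q <= size (rcons s c), a \notin drop q (rcons s c)
                & xstate (rcons s c) a = (xval (rcons s c) q).+1].
  move=> eq_c; exists (size s).+1.
  by rewrite size_rcons drop_oversize ?size_rcons // xval_rcons eqxx.
case: (eqVneq a c) => [eq_ac|neq_ac].
  by apply: witness_last; rewrite xstate_rcons eq_ac eqxx minnn.
have [le_ac|lt_ca] := leqP (xstate s a) (xstate s c).+1; last first.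
  apply: witness_last; rewrite xstate_rcons (negbTE neq_ac).
  exact/minn_idPr/ltnW.
exists q; rewrite size_rcons drop_rcons // mem_rcons in_cons negb_or neq_ac.
rewrite xstate_rcons (negbTE neq_ac) xval_rcons ltn_eqF ?ltnS //.
by rewrite (minn_idPl le_ac) leqW.
Qed.

Lemma xval_nth w j c :
  j < size w -> xval w j.+1 = xstate (take j w) (nth c w j).
Proof.
move=> lt_j; rewrite -(xval_take w (leqnn j.+1)) (take_nth c lt_j) xval_rcons.
by rewrite size_takel ?(ltnW lt_j) ?eqxx.
Qed.

Lemma xval_le_size w r i :
  xeval w r = Some i -> xval w i <= size r.
Proof.
elim/last_ind: r i => [|r a IHr] i; first by case=> <-.
rewrite xeval_rcons size_rcons.
case: (xeval w r) IHr => [q|] // IHr /= /next_posP.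
case: i => [|j] [/andP[lt_qj lt_j] //= nth_j a_notin].
rewrite -/(xval w j.+1) (xval_nth a lt_j) nth_j.
apply: leq_trans (xstate_le _ a_notin) _.
  by rewrite size_takel // (ltnW lt_j).
by rewrite xval_take // ltnS (IHr q erefl).
Qed.

Lemma xval_attained w i :
  i <= size w -> exists2 r, xeval w r = Some i & size r = xval w i.
Proof.
elim/ltn_ind: i => -[_ _|j IHj lt_j]; first by exists [::].
have c : A by case: w lt_j {IHj} => [|c].
set a := nth c w j; have [q [le_q a_notin eq_q]] := xstate_witness (take j w) a.
rewrite size_takel ?(ltnW lt_j) // in le_q.
have le_qw : q <= size w := leq_trans le_q (ltnW lt_j).
have [r er sr] := IHj q (leq_ltn_trans le_q (ltnSn j)) le_qw.
exists (rcons r a).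
  rewrite xeval_rcons er /=; apply/next_posP; rewrite ltnS le_q.
  by split => //; rewrite /a (set_nth_default c).
by rewrite size_rcons (xval_nth c lt_j) eq_q sr xval_take.
Qed.

End Algorithm.

Theorem lemma15 (A : finType) (w : seq A) (i : nat) :
  1 <= i <= size w ->
  (exists r : seq A, [/\ r != [::], xeval w r = Some i &
                         size r = nth 0 (xalgo w) i.-1]) /\
  (forall r : seq A, r != [::] -> xeval w r = Some i ->
                     nth 0 (xalgo w) i.-1 <= size r).
Proof.
case: i => // j /= lt_j; split; last by move=> r _; exact: xval_le_size.
have [r er sr] := xval_attained lt_j.
by exists r; split => //; case: r er {sr}.
Qed.
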